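(* In the setting (R), fix $x\in\mathbb{R}^n$ and let $(\lambda_k)_k,(\mu_k)_k\subset(0,+\infty)$ converge to $0$ with $\lim_{k\to\infty}\lambda_k/\mu_k=c\in(0,+\infty)$. Let $u_k=u_{\lambda_k,\mu_k}$ and $p_k=\nabla S_{\lambda_k,\mu_k}(x)$. Then $$\lim_{k\to\infty}u_k=\arg\min_{u\in U(x)}\|u\|_2\qquad\text{and}\qquad\lim_{k\to\infty}p_k=\arg\min_{p\in\partial S(x)}\|p\|_2,$$ i.e. $u_k$ and $p_k$ converge to the Euclidean projections of $0$ onto $U(x)$ and $\partial S(x)$, respectively.
   Context: Setting (R): Let $F_1=\|\cdot\|$ and $F_2=|||\cdot|||$ be two norms on $\mathbb{R}^n$, with dual norms $\|\cdot\|_*$ and $|||\cdot|||_*$, so that $F_2^*(y)=I\{|||y|||_*\le1\}$ (indicator: $0$ if $|||y|||_*\le1$, $+\infty$ otherwise). For $x\in\mathbb{R}^n$ define $S(x)=\min_{u\in\mathbb{R}^n}F_1(u)+F_2^*(x-u)$ and $U(x)=\arg\min_{u\in\mathbb{R}^n}F_1(u)+F_2^*(x-u)$ (a nonempty closed convex set). For $\lambda,\mu>0$, problem (P) is $$\min_{v,w\in\mathbb{R}^n}\ F_1(v)+\frac{\lambda}{2}\|v\|_2^2+F_2^*(w)+\frac{1}{2\mu}\|x-v-w\|_2^2,$$ which has a unique minimizer denoted $(v_{\lambda,\mu},w_{\lambda,\mu})$; its minimal value, as a function of $x$, is denoted $S_{\lambda,\mu}(x)$, which is differentiable in $x$; set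 $u_{\lambda,\mu}=x-w_{\lambda,\mu}$. $\partial$ denotes the convex subdifferential. *)

From mathcomp Require Import all_boot.
From Stdlib Require Import Reals ClassicalEpsilon.
Open Scope R_scope.

Definition vec (n : nat) := 'I_n -> R.

Definition vadd {n} (u v : vec n) : vec n := fun i => u i + v i.
Definition vsub {n} (u v : vec n) : vec n := fun i => u i - v i.
Definition vscale {n} (a : R) (u : vec n) : vec n := fun i => a * u i.
Definition vzero {n} : vec n := fun _ => 0.

Definition dot {n} (u v : vec n) : R := \big[Rplus/0]_(i < n) (u i * v i).
Definition norm2 {n} (u : vec n) : R := sqrt (dot u u).

Definition is_norm {n} (N : vec n -> R) : Prop :=
  (forall v, 0 <= N v) /\
  (forall v, N v = 0 -> v = vzero) /\
  (forall a v, N (vscale a v) = Rabs a * N v) /\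
  (forall u v, N (vadd u v) <= N u + N v).

(* |||y|||_* <= 1, where |||y|||_* = sup { <z,y> : |||z||| <= 1 } is the dual
   norm of N2; dom F2^* is this dual unit ball (F2^* is its indicator). *)
Definition dual_ball {n} (N2 : vec n -> R) (y : vec n) : Prop :=
  forall z, N2 z <= 1 -> dot z y <= 1.

Definition is_glb (P : R -> Prop) (s : R) : Prop :=
  (forall t, P t -> s <= t) /\ (forall b, (forall t, P t -> b <= t) -> b <= s).
Definition inf_of (P : R -> Prop) : R := epsilon (inhabits 0) (fun s => is_glb P s).

(* S(x) = min_u F1(u) + F2^*(x-u) *)
Definition S_fun {n} (N1 N2 : vec n -> R) (x : vec n) : R :=
  inf_of (fun t => exists u, dual_ball N2 (vsub x u) /\ t = N1 u).

(* U(x) = argmin_u F1(u) + F2^*(x-u) *)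
Definition in_U {n} (N1 N2 : vec n -> R) (x u : vec n) : Prop :=
  dual_ball N2 (vsub x u) /\
  (forall u', dual_ball N2 (vsub x u') -> N1 u <= N1 u').

Definition in_subdiff_S {n} (N1 N2 : vec n -> R) (x p : vec n) : Prop :=
  forall y, S_fun N1 N2 x + dot p (vsub y x) <= S_fun N1 N2 y.

(* objective of (P) restricted to dom F2^* (where F2^*(w) = 0) *)
Definition P_obj {n} (N1 : vec n -> R) (lam mu : R) (x v w : vec n) : R :=
  N1 v + lam / 2 * norm2 v ^ 2 + / (2 * mu) * norm2 (vsub (vsub x v) w) ^ 2.

Definition P_minimizer {n} (N1 N2 : vec n -> R) (lam mu : R) (x v w : vec n) : Prop :=
  dual_ball N2 w /\
  (forall v' w', dual_ball N2 w' -> P_obj N1 lam mu x v w <= P_obj N1 lam mu x v' w').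

Definition S_lm {n} (N1 N2 : vec n -> R) (lam mu : R) (x : vec n) : R :=
  inf_of (fun t => exists v w, dual_ball N2 w /\ t = P_obj N1 lam mu x v w).

Definition is_gradient {n} (f : vec n -> R) (x p : vec n) : Prop :=
  forall eps, 0 < eps -> exists delta, 0 < delta /\
    forall h, norm2 h < delta ->
      Rabs (f (vadd x h) - f x - dot p h) <= eps * norm2 h.

Definition vconv {n} (s : nat -> vec n) (l : vec n) : Prop :=
  forall eps, 0 < eps -> exists N, forall k, (N <= k)%nat -> norm2 (vsub (s k) l) < eps.

(* By optimality of (P), p_k = (x - v_k - w_k) / mu_k is a normal
   vector to the dual ball at w_k and p_k - lam_k v_k is a subgradient of N1
   at v_k.  Passing to the limit in these two conditions shows that every
   cluster point (ub, pb) of (u_k, p_k) satisfies ub in U(x), pb in dS(x), and,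
   by monotonicity of subdifferentials and normal cones,
       c <ub, ub - uu> <= <pp - pb, pb>   for all uu in U(x), pp in dS(x).
   Taking pp = pb, resp. uu = ub, gives the variational inequalities that
   characterize ub and pb as the minimal-norm elements of U(x) and dS(x).
   Since (u_k) and (p_k) are bounded, Bolzano-Weierstrass provides cluster
   points along any subsequence; as they are unique, the whole sequences
   converge. *)

From HB Require Import structures.
From mathcomp Require Import all_boot zify.
From Stdlib Require Import Reals Lra Lia FunctionalExtensionality.
From Stdlib Require Import ClassicalEpsilon Classical.
Open Scope R_scope.

Lemma Rplus_associative : associative Rplus.
Proof. by move=> a b c; ring. Qed.
HB.instance Definition _ :=
  Monoid.isComLaw.Build R 0 Rplus Rplus_associative Rplus_comm Rplus_0_l.

Lemma sum_scal (m : nat) (a : R) (F : 'I_m -> R) :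
  \big[Rplus/0]_(i < m) (a * F i) = a * \big[Rplus/0]_(i < m) F i.
Proof. by apply: (big_rec2 (fun s t => s = a * t)) => [|i s t _ ->]; ring. Qed.

Lemma sum_le (m : nat) (F G : 'I_m -> R) :
  (forall i, F i <= G i) -> \big[Rplus/0]_(i < m) F i <= \big[Rplus/0]_(i < m) G i.
Proof.
move=> FG; apply: (big_rec2 (fun s t => s <= t)) => [|i s t _ st]; first lra.
by have := FG i; lra.
Qed.

Lemma sum_ge0 (m : nat) (F : 'I_m -> R) :
  (forall i, 0 <= F i) -> 0 <= \big[Rplus/0]_(i < m) F i.
Proof. by move=> F0; apply: (big_ind (fun s => 0 <= s)) => // [|s t]; lra. Qed.

Lemma sum_const (m : nat) (a : R) : \big[Rplus/0]_(i < m) a = INR m * a.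
Proof.
elim: m => [|m IH]; first by rewrite big_ord0 /=; ring.
by rewrite big_ord_recr IH S_INR /=; ring.
Qed.

Ltac vext := apply: functional_extensionality => ?;
  unfold vsub, vadd, vscale, vzero; simpl; ring.

Section Euclid.
Context {n : nat}.
Implicit Types (u v z : vec n) (a : R).

Lemma dot_sym u v : dot u v = dot v u.
Proof. by apply: eq_bigr => i _; ring. Qed.

Lemma dot_addl u v z : dot (vadd u v) z = dot u z + dot v z.
Proof. by rewrite /dot -big_split; apply: eq_bigr => i _ /=; rewrite /vadd; ring. Qed.

Lemma dot_scalel a u z : dot (vscale a u) z = a * dot u z.
Proof. by rewrite /dot -sum_scal; apply: eq_bigr => i _ /=; rewrite /vscale; ring. Qed.

Lemma dot_subl u v z : dot (vsub u v) z = dot u z - dot v z.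
Proof.
have -> : vsub u v = vadd u (vscale (-1) v) by vext.
by rewrite dot_addl dot_scalel; ring.
Qed.

Lemma dot_addr u v z : dot z (vadd u v) = dot z u + dot z v.
Proof. by rewrite dot_sym dot_addl !(dot_sym z). Qed.

Lemma dot_subr u v z : dot z (vsub u v) = dot z u - dot z v.
Proof. by rewrite dot_sym dot_subl !(dot_sym z). Qed.

Lemma dot_scaler a u z : dot z (vscale a u) = a * dot z u.
Proof. by rewrite dot_sym dot_scalel (dot_sym z). Qed.

Lemma dot_zeror z : dot z vzero = 0.
Proof.
have -> : (vzero : vec n) = vscale 0 vzero by vext.
by rewrite dot_scaler; ring.
Qed.

Lemma dot_zerol z : dot vzero z = 0.
Proof. by rewrite dot_sym dot_zeror. Qed.

Lemma dot_ge0 u : 0 <= dot u u.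
Proof. by apply: sum_ge0 => i; nra. Qed.

Lemma norm2_ge0 u : 0 <= norm2 u.
Proof. exact: sqrt_pos. Qed.

Lemma norm2_sq u : norm2 u * norm2 u = dot u u.
Proof. by rewrite /norm2 sqrt_sqrt //; apply: dot_ge0. Qed.

Lemma norm2_pow2 u : norm2 u ^ 2 = dot u u.
Proof. by rewrite /= Rmult_1_r norm2_sq. Qed.

Lemma coord_sq u i : u i * u i <= dot u u.
Proof.
rewrite /dot (bigD1 i) //= -{1}(Rplus_0_r (u i * u i)); apply: Rplus_le_compat_l.
by apply: (big_ind (fun s => 0 <= s)) => [|s t|j _]; [lra|lra|nra].
Qed.

Lemma coord_le u i : Rabs (u i) <= norm2 u.
Proof.
have := coord_sq u i; rewrite -norm2_sq => H; have H0 := norm2_ge0 u.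
by apply: Rabs_le; split; nra.
Qed.

Lemma dot_eq0 u : dot u u = 0 -> u = vzero.
Proof.
by move=> u0; apply: functional_extensionality => i; have := coord_sq u i; rewrite u0 /vzero; nra.
Qed.

Lemma cauchy_schwarz_sq u v : dot u v * dot u v <= dot u u * dot v v.
Proof.
have quad t : 0 <= dot u u - 2 * t * dot u v + t * t * dot v v.
  have := dot_ge0 (vsub u (vscale t v)).
  by rewrite !dot_subl !dot_subr !dot_scalel !dot_scaler (dot_sym v u); lra.
have := dot_ge0 u; have := dot_ge0 v => v0 u0.
case: (Req_dec (dot v v) 0) => [vv0|vv0].
  case: (Req_dec (dot u v) 0) => [-> | uv0]; first by rewrite vv0; lra.
  have := quad ((dot u u + 1) / (2 * dot u v)); rewrite vv0.
  have -> : 2 * ((dot u u + 1) / (2 * dot u v)) * dot u v = dot u u + 1 by field.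
  lra.
have := quad (dot u v / dot v v).
have -> : dot u v / dot v v * (dot u v / dot v v) * dot v v = dot u v * (dot u v / dot v v)
  by field.
have -> : dot u v * (dot u v / dot v v) = dot u v * dot u v / dot v v by field.
move=> H; have vpos : 0 < dot v v by lra.
have : 0 <= (dot u u - 2 * (dot u v / dot v v) * dot u v + dot u v * dot u v / dot v v) * dot v v
  by apply: Rmult_le_pos; lra.
have -> : (dot u u - 2 * (dot u v / dot v v) * dot u v + dot u v * dot u v / dot v v) * dot v v
          = dot u u * dot v v - dot u v * dot u v by field.
lra.
Qed.

Lemma cauchy_schwarz u v : Rabs (dot u v) <= norm2 u * norm2 v.
Proof.
have := cauchy_schwarz_sq u v; rewrite -!norm2_sq.
have uv0 := Rmult_le_pos _ _ (norm2_ge0 u) (norm2_ge0 v) => H.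
by apply: Rabs_le; split; nra.
Qed.

Lemma dot_le_norm2 u v : dot u v <= norm2 u * norm2 v.
Proof. by have := cauchy_schwarz u v; have := Rle_abs (dot u v); lra. Qed.

Lemma norm2_triangle u v : norm2 (vadd u v) <= norm2 u + norm2 v.
Proof.
have := norm2_ge0 u; have := norm2_ge0 v; have := norm2_ge0 (vadd u v).
have := dot_le_norm2 u v.
have : norm2 (vadd u v) * norm2 (vadd u v)
       = norm2 u * norm2 u + 2 * dot u v + norm2 v * norm2 v.
  by rewrite !norm2_sq dot_addl !dot_addr (dot_sym v u); ring.
nra.
Qed.

Lemma norm2_scale a u : norm2 (vscale a u) = Rabs a * norm2 u.
Proof.
rewrite /norm2 dot_scalel dot_scaler -Rmult_assoc sqrt_mult ?sqrt_Rsqr_abs //.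
- exact: Rle_0_sqr.
- exact: dot_ge0.
Qed.

Lemma norm2_sub_le u v : norm2 (vsub u v) <= norm2 u + norm2 v.
Proof.
have -> : vsub u v = vadd u (vscale (-1) v) by vext.
apply: Rle_trans (norm2_triangle _ _) _.
by rewrite norm2_scale Rabs_Ropp Rabs_R1 Rmult_1_l; lra.
Qed.

Lemma norm2_zero : norm2 (vzero : vec n) = 0.
Proof. by rewrite /norm2 dot_zerol sqrt_0. Qed.

Lemma dot_add_scale u d a :
  dot (vadd u (vscale a d)) (vadd u (vscale a d)) = dot u u + 2 * a * dot u d + a * a * dot d d.
Proof. by rewrite !dot_addl !dot_addr !dot_scalel !dot_scaler (dot_sym d u); ring. Qed.

Lemma dot_sub_scale u d a :
  dot (vsub u (vscale a d)) (vsub u (vscale a d)) = dot u u - 2 * a * dot u d + a * a * dot d d.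
Proof. by rewrite !dot_subl !dot_subr !dot_scalel !dot_scaler (dot_sym d u); ring. Qed.

Lemma norm2_le_l1 u : norm2 u <= \big[Rplus/0]_(i < n) Rabs (u i).
Proof.
have [H1 H2] : dot u u <= \big[Rplus/0]_(i < n) Rabs (u i) * \big[Rplus/0]_(i < n) Rabs (u i)
               /\ 0 <= \big[Rplus/0]_(i < n) Rabs (u i).
  apply: (big_rec2 (fun s t => s <= t * t /\ 0 <= t)) => [|i s t _ [st t0]]; first lra.
  have := Rabs_pos (u i); have : u i * u i = Rabs (u i) * Rabs (u i).
    by rewrite -Rabs_mult Rabs_pos_eq //; nra.
  by split; nra.
by rewrite /norm2 -(sqrt_square _ H2); apply: sqrt_le_1_alt.
Qed.

End Euclid.

Section NormBound.
Context {n : nat} (N : vec n -> R).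
Hypothesis hN : is_norm N.

Lemma norm_ge0 v : 0 <= N v.
Proof. by case: hN. Qed.

Lemma norm_scale a v : N (vscale a v) = Rabs a * N v.
Proof. by case: hN => _ [_ []]. Qed.

Lemma norm_triangle u v : N (vadd u v) <= N u + N v.
Proof. by case: hN => _ [_ []]. Qed.

Lemma norm_zero : N vzero = 0.
Proof.
have -> : (vzero : vec n) = vscale 0 vzero by vext.
by rewrite norm_scale Rabs_R0; ring.
Qed.

Lemma norm_sub_sym u v : N (vsub u v) = N (vsub v u).
Proof.
have -> : vsub u v = vscale (-1) (vsub v u) by vext.
by rewrite norm_scale Rabs_Ropp Rabs_R1; ring.
Qed.

Lemma norm_le_sub u v : N u <= N v + N (vsub u v).
Proof.
have {1}-> : u = vadd v (vsub u v) by vext.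
exact: norm_triangle.
Qed.

Lemma norm_convex v v' t : 0 <= t <= 1 ->
  N (vadd v (vscale t (vsub v' v))) <= (1 - t) * N v + t * N v'.
Proof.
move=> t01; have -> : vadd v (vscale t (vsub v' v)) = vadd (vscale (1 - t) v) (vscale t v')
  by vext.
by apply: Rle_trans (norm_triangle _ _) _; rewrite !norm_scale !Rabs_pos_eq; lra.
Qed.

Definition vsum {m : nat} (F : 'I_m -> vec n) : vec n :=
  fun j => \big[Rplus/0]_(i < m) F i j.

Lemma norm_vsum (m : nat) (F : 'I_m -> vec n) :
  N (vsum F) <= \big[Rplus/0]_(i < m) N (F i).
Proof.
elim: m F => [|m IH] F.
  have -> : vsum F = vzero by apply: functional_extensionality => j; rewrite /vsum big_ord0.
  by rewrite norm_zero big_ord0; lra.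
have -> : vsum F = vadd (vsum (fun i => F (widen_ord (leqnSn m) i))) (F ord_max).
  by apply: functional_extensionality => j; rewrite /vsum /vadd big_ord_recr.
rewrite big_ord_recr /=; apply: Rle_trans (norm_triangle _ _) _.
by apply: Rplus_le_compat_r; apply: IH.
Qed.

Definition ebasis (i : 'I_n) : vec n := fun j => if j == i then 1 else 0.

Definition norm_const : R := \big[Rplus/0]_(i < n) N (ebasis i).

Lemma norm_const_ge0 : 0 <= norm_const.
Proof. by apply: sum_ge0 => i; apply: norm_ge0. Qed.

Lemma norm_le_euclid v : N v <= norm_const * norm2 v.
Proof.
have {1}-> : v = vsum (fun i => vscale (v i) (ebasis i)).
  apply: functional_extensionality => j.
  rewrite /vsum /vscale /ebasis (bigD1 j) //= eqxx big1; first ring.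
  by move=> i /negbTE; rewrite eq_sym => ->; ring.
apply: Rle_trans (norm_vsum _ _) _; rewrite /norm_const Rmult_comm -sum_scal.
apply: sum_le => i; rewrite norm_scale.
by apply: Rmult_le_compat_r; [apply: norm_ge0 | apply: coord_le].
Qed.

Lemma norm_lipschitz u v : Rabs (N u - N v) <= norm_const * norm2 (vsub u v).
Proof.
have := norm_le_sub u v; have := norm_le_sub v u; rewrite (norm_sub_sym v u).
have := norm_le_euclid (vsub u v).
by move=> *; apply: Rabs_le; split; lra.
Qed.

End NormBound.

Definition strictly_incr (phi : nat -> nat) : Prop := forall k, (phi k < phi k.+1)%nat.

Lemma strictly_incr_ge phi : strictly_incr phi -> forall k, (k <= phi k)%nat.
Proof. by move=> phi_incr; elim=> [|k IH] //; have := phi_incr k; lia. Qed.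

Lemma strictly_incr_comp phi psi :
  strictly_incr phi -> strictly_incr psi -> strictly_incr (fun k => phi (psi k)).
Proof.
move=> phi_incr psi_incr k.
have mono a b : (a < b)%nat -> (phi a < phi b)%nat.
  elim: b => [|b IH] ab //; have := phi_incr b.
  by case: (ltngtP a b) ab => [/IH|//|->] /=; lia.
exact/mono/psi_incr.
Qed.

Lemma extract_subseq (P : nat -> nat -> Prop) :
  (forall j N, exists k, (N <= k)%nat /\ P j k) ->
  exists phi, strictly_incr phi /\ forall j, P j (phi j).
Proof.
move=> HP; pose pick j N := epsilon (inhabits 0%nat) (fun k => (N <= k)%nat /\ P j k).
have pickP j N : (N <= pick j N)%nat /\ P j (pick j N) by exact: (epsilon_spec (inhabits 0%nat) _ (HP j N)).
pose fix phi k := if k is k'.+1 then pick k (phi k').+1 else pick 0%nat 0%nat.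
exists phi; split=> [k | [|k]] /=; [|exact: proj2 (pickP _ _)..].
by have := proj1 (pickP k.+1 (phi k).+1); lia.
Qed.

Lemma Un_cv_subseq {s : nat -> R} {l phi} :
  strictly_incr phi -> Un_cv s l -> Un_cv (fun k => s (phi k)) l.
Proof.
move=> phi_incr cv eps eps0; have [K HK] := cv eps eps0; exists K => k Kk.
by apply: HK; have := strictly_incr_ge _ phi_incr k; lia.
Qed.

Lemma bounded_subseq_R (s : nat -> R) M : (forall k, Rabs (s k) <= M) ->
  exists phi l, strictly_incr phi /\ Un_cv (fun k => s (phi k)) l.
Proof.
move=> sM; have [l adh] : exists l, ValAdh s l.
  apply: (Bolzano_Weierstrass s (fun t => -M <= t <= M)); first exact: compact_P3.
  by move=> k; have := sM k; have := Rle_abs (s k); have := Rle_abs (- s k); rewrite Rabs_Ropp; lra.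
have near j N : exists k, (N <= k)%nat /\ Rabs (s k - l) < / INR j.+1.
  have r0 : 0 < / INR j.+1 by apply/Rinv_0_lt_compat/lt_0_INR; lia.
  have [k [Nk lk]] := adh _ N (ex_intro _ (mkposreal _ r0) (fun y (yl : disc l _ y) => yl)).
  by exists k; split => //; apply/leP.
have [phi [phi_incr phiP]] := extract_subseq _ near.
exists phi, l; split => // eps eps0.
have [K [Keps K0]] := archimed_cor1 eps eps0.
exists K => j Kj; apply: Rlt_le_trans (phiP j) _; apply: Rle_trans (Rlt_le _ _ Keps).
by apply: Rinv_le_contravar; [apply: lt_0_INR | apply: le_INR]; lia.
Qed.

Section VectorSequences.
Context {n : nat}.
Implicit Types (s : nat -> vec n) (l L : vec n).

Lemma vconv_subseq {s l phi} :
  strictly_incr phi -> vconv s l -> vconv (fun k => s (phi k)) l.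
Proof.
move=> phi_incr cv eps eps0; have [K HK] := cv eps eps0; exists K => k Kk.
by apply: HK; have := strictly_incr_ge _ phi_incr k; lia.
Qed.

Lemma vconv_coord s l : (forall i, Un_cv (fun k => s k i) (l i)) -> vconv s l.
Proof.
move=> cv eps eps0; set e := eps / (INR n + 1).
have n1 : 0 < INR n + 1 by have := pos_INR n; lra.
have e0 : 0 < e by apply: Rdiv_lt_0_compat.
pose K i := epsilon (inhabits 0%nat)
  (fun K => forall k, (k >= K)%coq_nat -> R_dist (s k i) (l i) < e).
have KP i : forall k, (k >= K i)%coq_nat -> R_dist (s k i) (l i) < e.
  exact: (epsilon_spec (inhabits 0%nat) _ (cv i e e0)).
exists (\max_(i < n) K i)%nat => k Kk.
apply: Rle_lt_trans (norm2_le_l1 _) _; apply: (Rle_lt_trans _ (\big[Rplus/0]_(i < n) e)).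
  apply: sum_le => i; apply/Rlt_le/KP.
  by apply/leP; apply: leq_trans Kk; exact: leq_bigmax.
rewrite sum_const /e; have : INR n / (INR n + 1) < 1.
  by apply: (Rmult_lt_reg_r (INR n + 1)) => //; rewrite /Rdiv Rmult_assoc Rinv_l; lra.
have -> : INR n * (eps / (INR n + 1)) = eps * (INR n / (INR n + 1)) by field; lra.
nra.
Qed.

(* Bolzano-Weierstrass in R^n, by extracting one coordinate at a time. *)
Lemma bounded_subseq s M : (forall k, norm2 (s k) <= M) ->
  exists phi l, strictly_incr phi /\ vconv (fun k => s (phi k)) l.
Proof.
move=> sM.
have first_coords m : (m <= n)%nat -> exists phi, strictly_incr phi /\
    forall i : 'I_n, (i < m)%nat -> exists li, Un_cv (fun k => s (phi k) i) li.
  elim: m => [_|m IH mn]; first by exists (fun k => k); split => // k /=.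
  have [phi [phi_incr cv]] := IH (ltnW mn).
  have [psi [lm [psi_incr cvm]]] := bounded_subseq_R (fun k => s (phi k) (Ordinal mn)) M
    (fun k => Rle_trans _ _ _ (coord_le _ _) (sM _)).
  exists (fun k => phi (psi k)); split; first exact: strictly_incr_comp.
  move=> i; rewrite ltnS leq_eqVlt => /orP [/eqP im | im].
    by exists lm; have -> : i = Ordinal mn by apply: val_inj.
  have [li cvi] := cv i im; exists li.
  exact: Un_cv_subseq psi_incr cvi.
have [phi [phi_incr cv]] := first_coords n (leqnn n).
pose l i := epsilon (inhabits 0) (fun li => Un_cv (fun k => s (phi k) i) li).
exists phi, l; split => //; apply: vconv_coord => i.
exact: (epsilon_spec (inhabits 0) _ (cv i (ltn_ord i))).
Qed.

Lemma subseq_conv s L :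
  (forall sg, strictly_incr sg ->
     exists tau, strictly_incr tau /\ vconv (fun k => s (sg (tau k))) L) ->
  vconv s L.
Proof.
move=> H eps eps0; apply: NNPP => noK.
have far (j K : nat) : exists k, (K <= k)%nat /\ eps <= norm2 (vsub (s k) L).
  apply: NNPP => nk; apply: noK; exists K => k Kk.
  by apply: Rnot_le_lt => ek; apply: nk; exists k.
have [sg [sg_incr sgP]] := extract_subseq _ far.
have [tau [_ cv]] := H sg sg_incr; have [K HK] := cv eps eps0.
by have := HK K (leqnn K); have := sgP (tau K); lra.
Qed.

End VectorSequences.

Lemma cv_const (a : R) : Un_cv (fun _ => a) a.
Proof. by move=> eps eps0; exists 0%nat => k _; rewrite /R_dist Rminus_diag Rabs_R0. Qed.

Lemma squeeze (s g : nat -> R) L :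
  (forall k, Rabs (s k - L) <= g k) -> Un_cv g 0 -> Un_cv s L.
Proof.
move=> sg g0 eps eps0; have [K HK] := g0 eps eps0; exists K => k Kk.
have := HK k Kk; rewrite /R_dist Rminus_0_r => gk.
by have := sg k; have := Rle_abs (g k); rewrite /R_dist; lra.
Qed.

Section VectorLimits.
Context {n : nat}.
Implicit Types (s t : nat -> vec n) (l m : vec n).

Lemma vconv_norm s l : vconv s l <-> Un_cv (fun k => norm2 (vsub (s k) l)) 0.
Proof.
split=> cv eps eps0; have [K HK] := cv eps eps0; exists K => k Kk.
- by rewrite /R_dist Rminus_0_r Rabs_pos_eq; [apply: HK; apply/leP | apply: norm2_ge0].
- have : (k >= K)%coq_nat by apply/leP.
  by move/HK; rewrite /R_dist Rminus_0_r Rabs_pos_eq //; apply: norm2_ge0.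
Qed.

Lemma vsqueeze s l (g : nat -> R) :
  (forall k, norm2 (vsub (s k) l) <= g k) -> Un_cv g 0 -> vconv s l.
Proof.
move=> sg g0; apply/vconv_norm; apply: (squeeze _ g) => // k.
by rewrite Rminus_0_r Rabs_pos_eq; [apply: sg | apply: norm2_ge0].
Qed.

Lemma vconv_const l : vconv (fun _ => l) l.
Proof.
apply: (vsqueeze _ _ (fun _ => 0)) => [k|]; last exact: cv_const.
have -> : vsub l l = vzero by vext.
rewrite norm2_zero; lra.
Qed.

Lemma vconv_sub {s t l m} :
  vconv s l -> vconv t m -> vconv (fun k => vsub (s k) (t k)) (vsub l m).
Proof.
move=> /vconv_norm sl /vconv_norm tm.
apply: (vsqueeze _ _ (fun k => norm2 (vsub (s k) l) + norm2 (vsub (t k) m))).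
- move=> k; have -> : vsub (vsub (s k) (t k)) (vsub l m) = vsub (vsub (s k) l) (vsub (t k) m)
    by vext.
  exact: norm2_sub_le.
- by rewrite -(Rplus_0_r 0); apply: CV_plus.
Qed.

Lemma vconv_scale {a : nat -> R} {s A l} :
  Un_cv a A -> vconv s l -> vconv (fun k => vscale (a k) (s k)) (vscale A l).
Proof.
move=> aA /vconv_norm sl.
apply: (vsqueeze _ _ (fun k => Rabs (a k) * norm2 (vsub (s k) l) + Rabs (a k - A) * norm2 l)).
- move=> k; have -> : vsub (vscale (a k) (s k)) (vscale A l)
                      = vadd (vscale (a k) (vsub (s k) l)) (vscale (a k - A) l) by vext.
  by apply: Rle_trans (norm2_triangle _ _) _; rewrite !norm2_scale; lra.
- have -> : 0 = Rabs A * 0 + Rabs (A - A) * norm2 l by rewrite Rminus_diag Rabs_R0; ring.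
  apply: CV_plus; apply: CV_mult => //; try exact: cv_const; apply: cv_cvabs => //.
  by apply: CV_minus => //; exact: cv_const.
Qed.

Lemma dot_cv {s t l m} :
  vconv s l -> vconv t m -> Un_cv (fun k => dot (s k) (t k)) (dot l m).
Proof.
move=> /vconv_norm sl /vconv_norm tm.
apply: (squeeze _ (fun k => norm2 (vsub (s k) l) * norm2 (vsub (t k) m)
   + norm2 (vsub (s k) l) * norm2 m + norm2 l * norm2 (vsub (t k) m))).
- move=> k; have -> : dot (s k) (t k) - dot l m = dot (vsub (s k) l) (vsub (t k) m)
     + dot (vsub (s k) l) m + dot l (vsub (t k) m) by rewrite !dot_subl !dot_subr; ring.
  do 2 (apply: Rle_trans (Rabs_triang _ _) _; apply: Rplus_le_compat; last exact: cauchy_schwarz).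
  exact: cauchy_schwarz.
- have -> : 0 = 0 * 0 + 0 * norm2 m + norm2 l * 0 by ring.
  by apply: CV_plus; [apply: CV_plus|]; apply: CV_mult => //; exact: cv_const.
Qed.

Lemma norm_cv {N : vec n -> R} {s l} :
  is_norm N -> vconv s l -> Un_cv (fun k => N (s k)) (N l).
Proof.
move=> hN /vconv_norm sl; apply: (squeeze _ (fun k => norm_const N * norm2 (vsub (s k) l))).
  by move=> k; apply: norm_lipschitz.
by rewrite -(Rmult_0_r (norm_const N)); apply: CV_mult => //; exact: cv_const.
Qed.

End VectorLimits.

Lemma inf_of_glb (P : R -> Prop) t0 :
  P t0 -> (forall t, P t -> 0 <= t) -> is_glb P (inf_of P).
Proof.
move=> Pt0 P0; apply: (epsilon_spec (inhabits 0) (fun s => is_glb P s)).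
have ub : bound (fun y => P (- y)) by exists 0 => y Py; have := P0 _ Py; lra.
have ne : exists y, P (- y) by exists (- t0); rewrite Ropp_involutive.
have [m [m_ub m_least]] := completeness _ ub ne.
exists (- m); split=> [t Pt | b b_lb].
  by have := m_ub (- t); rewrite Ropp_involutive => /(_ Pt); lra.
have : m <= - b by apply: m_least => y Py; have := b_lb _ Py; lra.
lra.
Qed.

Lemma inf_of_attained (P : R -> Prop) t :
  P t -> (forall t', P t' -> t <= t') -> inf_of P = t.
Proof.
move=> Pt t_min; have [lb glb] : is_glb P (inf_of P).
  apply: (epsilon_spec (inhabits 0) (fun s => is_glb P s)).
  by exists t; split=> // b; apply.
by apply: Rle_antisym; [apply: lb | apply: glb].
Qed.

Definition subgrad {n} (f : vec n -> R) (a g : vec n) : Prop :=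
  forall z, f a + dot g (vsub z a) <= f z.

Definition normal_vec {n} (C : vec n -> Prop) (a g : vec n) : Prop :=
  forall z, C z -> dot g (vsub z a) <= 0.

Section Monotonicity.
Context {n : nat}.
Implicit Types (a b g h : vec n).

Lemma subgrad_monotone (f : vec n -> R) a b g h :
  subgrad f a g -> subgrad f b h -> 0 <= dot (vsub g h) (vsub a b).
Proof.
move=> ag bh; have := ag b; have := bh a.
by rewrite dot_subl !dot_subr; lra.
Qed.

Lemma normal_monotone (C : vec n -> Prop) a b g h :
  C a -> C b -> normal_vec C a g -> normal_vec C b h -> 0 <= dot (vsub g h) (vsub a b).
Proof.
move=> Ca Cb ag bh; have := ag b Cb; have := bh a Ca.
by rewrite dot_subl !dot_subr; lra.
Qed.

Lemma subgrad_norm_bounded (N : vec n -> R) a g :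
  is_norm N -> subgrad N a g -> norm2 g <= norm_const N.
Proof.
move=> hN ag; have := ag (vadd a g).
have -> : vsub (vadd a g) a = g by vext.
have := norm_triangle N hN a g; have := norm_le_euclid N hN g; rewrite -norm2_sq.
have := norm_const_ge0 N hN; have := norm2_ge0 g; nra.
Qed.

Lemma min_norm_of_variational (C : vec n -> Prop) a :
  C a -> (forall b, C b -> dot a (vsub a b) <= 0) ->
  (C a /\ forall b, C b -> norm2 a <= norm2 b) /\
  (forall b, (C b /\ forall b', C b' -> norm2 b <= norm2 b') -> b = a).
Proof.
move=> Ca var; split; first split => // b Cb.
  have := var b Cb; rewrite dot_subr -norm2_sq.
  by have := dot_le_norm2 a b; have := norm2_ge0 a; have := norm2_ge0 b; nra.
move=> b [Cb b_min]; have := var b Cb; have := b_min a Ca; rewrite dot_subr => ba ab.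
have : dot b b <= dot a a by rewrite -!norm2_sq; have := norm2_ge0 b; nra.
move=> bbaa; have : dot (vsub a b) (vsub a b) = 0.
  by have := dot_ge0 (vsub a b); rewrite !dot_subl !dot_subr (dot_sym b a); lra.
move/dot_eq0 => ab0; apply: functional_extensionality => i.
by have := f_equal (fun f => f i) ab0; rewrite /vsub /vzero; lra.
Qed.

End Monotonicity.

Section ValueFunction.
Context {n : nat} (N1 N2 : vec n -> R).
Hypotheses (hN1 : is_norm N1) (hN2 : is_norm N2).

Lemma dual_ball_zero : dual_ball N2 vzero.
Proof. by move=> z _; rewrite dot_zeror; lra. Qed.

Lemma dual_ball_convex a b t : dual_ball N2 a -> dual_ball N2 b -> 0 <= t <= 1 ->
  dual_ball N2 (vadd a (vscale t (vsub b a))).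
Proof.
move=> Ba Bb t01 z Nz; rewrite dot_addr dot_scaler dot_subr.
by have := Ba z Nz; have := Bb z Nz; nra.
Qed.

Lemma dual_ball_closed (s : nat -> vec n) l :
  (forall k, dual_ball N2 (s k)) -> vconv s l -> dual_ball N2 l.
Proof.
move=> Bs sl z Nz.
exact: (Rle_cv_lim (fun k => Bs k z Nz) (dot_cv (vconv_const z) sl) (cv_const 1)).
Qed.

(* The dual unit ball is bounded: test the dual norm against w itself. *)
Lemma dual_ball_bounded w : dual_ball N2 w -> norm2 w <= norm_const N2 + 1.
Proof.
move=> Bw; have C0 := norm_const_ge0 N2 hN2.
case: (Req_dec (norm2 w) 0) => [-> | w0]; first lra.
have w_pos : 0 < norm2 w by have := norm2_ge0 w; lra.
pose a := / ((norm_const N2 + 1) * norm2 w).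
have a0 : 0 < a by apply/Rinv_0_lt_compat/Rmult_lt_0_compat => //; lra.
have : N2 (vscale a w) <= 1.
  rewrite norm_scale // Rabs_pos_eq; last lra.
  apply: Rle_trans (Rmult_le_compat_l _ _ _ (Rlt_le _ _ a0) (norm_le_euclid N2 hN2 w)) _.
  have -> : a * (norm_const N2 * norm2 w) = norm_const N2 / (norm_const N2 + 1).
    by rewrite /a; field; split; lra.
  apply: (Rmult_le_reg_r (norm_const N2 + 1)); first lra.
  by rewrite /Rdiv Rmult_assoc Rinv_l; lra.
move/Bw; rewrite dot_scalel -norm2_sq.
have -> : a * (norm2 w * norm2 w) = norm2 w / (norm_const N2 + 1).
  by rewrite /a; field; split; lra.
move=> H; apply: (Rmult_le_reg_r (/ (norm_const N2 + 1))); first by apply: Rinv_0_lt_compat; lra.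
by rewrite Rinv_r; lra.
Qed.

Lemma S_fun_glb y :
  is_glb (fun t => exists u, dual_ball N2 (vsub y u) /\ t = N1 u) (S_fun N1 N2 y).
Proof.
apply: (inf_of_glb _ (N1 y)); last by move=> t [u [_ ->]]; apply: norm_ge0.
exists y; split => //; have -> : vsub y y = vzero by vext.
exact: dual_ball_zero.
Qed.

Lemma S_fun_le y u : dual_ball N2 (vsub y u) -> S_fun N1 N2 y <= N1 u.
Proof. by move=> Byu; apply: (proj1 (S_fun_glb y)); exists u. Qed.

Lemma S_fun_ge y b :
  (forall u, dual_ball N2 (vsub y u) -> b <= N1 u) -> b <= S_fun N1 N2 y.
Proof. by move=> b_lb; apply: (proj2 (S_fun_glb y)) => t [u [Byu ->]]; apply: b_lb. Qed.

Lemma U_subdiff_of_ineq x ub pb : dual_ball N2 (vsub x ub) ->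
  (forall y u', dual_ball N2 (vsub y u') -> N1 ub + dot pb (vsub y x) <= N1 u') ->
  in_U N1 N2 x ub /\ in_subdiff_S N1 N2 x pb.
Proof.
move=> Bxub ineq.
have U_ub : in_U N1 N2 x ub.
  split => // u' Bxu'; have := ineq x u' Bxu'.
  have -> : vsub x x = vzero by vext.
  by rewrite dot_zeror; lra.
split => // y; have -> : S_fun N1 N2 x = N1 ub.
  by apply: Rle_antisym; [apply: S_fun_le | apply: S_fun_ge; apply: (proj2 U_ub)].
by apply: S_fun_ge => u' Byu'; apply: ineq.
Qed.

Lemma subdiff_S_at_U x uu pp : in_U N1 N2 x uu -> in_subdiff_S N1 N2 x pp ->
  subgrad N1 uu pp /\ normal_vec (dual_ball N2) (vsub x uu) pp.
Proof.
move=> [Bxuu uu_min] pp_sub.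
have S_x : S_fun N1 N2 x = N1 uu.
  by apply: Rle_antisym; [apply: S_fun_le | apply: S_fun_ge].
split=> [z | z Bz].
- have := pp_sub (vadd (vsub x uu) z); have := S_fun_le (vadd (vsub x uu) z) z.
  have -> : vsub (vadd (vsub x uu) z) z = vsub x uu by vext.
  have -> : vsub (vadd (vsub x uu) z) x = vsub z uu by vext.
  by rewrite S_x => /(_ Bxuu); lra.
- have := pp_sub (vadd z uu); have := S_fun_le (vadd z uu) uu.
  have -> : vsub (vadd z uu) uu = z by vext.
  have -> : vsub (vadd z uu) x = vsub z (vsub x uu) by vext.
  by rewrite S_x => /(_ Bz); lra.
Qed.

End ValueFunction.

Lemma first_order_coeff A B :
  (forall t, 0 < t <= 1 -> 0 <= t * A + t * t * B) -> 0 <= A.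
Proof.
move=> H; apply: Rnot_lt_le => A0.
have B1 : 0 < Rabs B + 1 by have := Rabs_pos B; lra.
pose t := Rmin 1 (- A / (2 * (Rabs B + 1))).
have t0 : 0 < t by apply: Rmin_pos; [lra | apply: Rdiv_lt_0_compat; lra].
have tB : t * B <= - A / 2.
  have : t * (Rabs B + 1) <= - A / (2 * (Rabs B + 1)) * (Rabs B + 1).
    by apply: Rmult_le_compat_r; [lra | apply: Rmin_r].
  have -> : - A / (2 * (Rabs B + 1)) * (Rabs B + 1) = - A / 2 by field; lra.
  by have := Rle_abs B; nra.
have := H t (conj t0 (Rmin_l _ _)); nra.
Qed.

Lemma gradient_of_upper_model {n} (f : vec n -> R) (x p q : vec n) M : 0 <= M ->
  is_gradient f x p -> (forall h, f (vadd x h) <= f x + dot q h + M * dot h h) -> p = q.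
Proof.
move=> M0 grad upper; set d := vsub p q.
suff /dot_eq0 d0 : dot d d = 0.
  by apply: functional_extensionality => i; have := f_equal (fun g => g i) d0; rewrite /d /vsub /vzero; lra.
apply: NNPP => dd0; have nd0 : 0 < norm2 d.
  by have := norm2_ge0 d; have := norm2_sq d; case: (Req_dec (norm2 d) 0) => [->|]; [nra|lra].
have [delta [delta0 small]] := grad (norm2 d / 2) ltac:(lra).
pose t := Rmin (delta / (2 * norm2 d)) (/ (4 * (M + 1))).
have t0 : 0 < t.
  by apply: Rmin_pos; [apply: Rdiv_lt_0_compat | apply: Rinv_0_lt_compat]; lra.
have Mt : M * t <= / 4.
  have : M * t <= M * / (4 * (M + 1)) by apply: Rmult_le_compat_l => //; apply: Rmin_r.
  have -> : M * / (4 * (M + 1)) = / 4 - / (4 * (M + 1)) by field; lra.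
  have : 0 < / (4 * (M + 1)) by apply: Rinv_0_lt_compat; lra.
  lra.
pose h := vscale t d.
have nh : norm2 h = t * norm2 d by rewrite /h norm2_scale Rabs_pos_eq //; lra.
have h_small : norm2 h < delta.
  rewrite nh; have : t * norm2 d <= delta / (2 * norm2 d) * norm2 d.
    by apply: Rmult_le_compat_r; [lra | apply: Rmin_l].
  have -> : delta / (2 * norm2 d) * norm2 d = delta / 2 by field; lra.
  lra.
have pq_h : dot p h - dot q h = t * (norm2 d * norm2 d).
  by rewrite -dot_subl -/d /h dot_scaler norm2_sq.
have hh : dot h h = t * t * (norm2 d * norm2 d) by rewrite /h dot_scalel dot_scaler -norm2_sq; ring.
have := small h h_small; have := upper h; rewrite nh hh => up.
move=> near; have := Rle_abs (- (f (vadd x h) - f x - dot p h)); rewrite Rabs_Ropp => lo.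
have K0 : 0 < t * (norm2 d * norm2 d) by apply: Rmult_lt_0_compat => //; nra.
have : M * (t * t * (norm2 d * norm2 d)) <= / 4 * (t * (norm2 d * norm2 d)).
  have -> : M * (t * t * (norm2 d * norm2 d)) = (M * t) * (t * (norm2 d * norm2 d)) by ring.
  by apply: Rmult_le_compat_r; lra.
nra.
Qed.

Section ProblemP.
Context {n : nat} (N1 N2 : vec n -> R) (x : vec n) (lam mu : R).
Hypotheses (hN1 : is_norm N1) (lam0 : 0 < lam) (mu0 : 0 < mu).

(* (x - v - w) / mu, the gradient in x of the coupling term of (P). *)
Definition residual (v w : vec n) : vec n := vscale (/ mu) (vsub (vsub x v) w).

Lemma P_obj_ge0 y v w : 0 <= P_obj N1 lam mu y v w.
Proof.
rewrite /P_obj !norm2_pow2; have := norm_ge0 N1 hN1 v.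
have := dot_ge0 v; have := dot_ge0 (vsub (vsub y v) w).
have : 0 < / (2 * mu) by apply: Rinv_0_lt_compat; lra.
nra.
Qed.

Lemma P_obj_move_w v w d t : P_obj N1 lam mu x v (vadd w (vscale t d))
  = P_obj N1 lam mu x v w - t * dot (residual v w) d + t * t * (/ (2 * mu) * dot d d).
Proof.
rewrite /P_obj /residual !norm2_pow2 dot_scalel.
have -> : vsub (vsub x v) (vadd w (vscale t d)) = vsub (vsub (vsub x v) w) (vscale t d) by vext.
by rewrite dot_sub_scale; field; lra.
Qed.

Lemma P_obj_move_v v w d t : P_obj N1 lam mu x (vadd v (vscale t d)) w
  = P_obj N1 lam mu x v w + (N1 (vadd v (vscale t d)) - N1 v)
    + t * (lam * dot v d - dot (residual v w) d) + t * t * ((lam / 2 + / (2 * mu)) * dot d d).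
Proof.
rewrite /P_obj /residual !norm2_pow2 dot_scalel dot_add_scale.
have -> : vsub (vsub x (vadd v (vscale t d))) w = vsub (vsub (vsub x v) w) (vscale t d) by vext.
by rewrite dot_sub_scale; field; lra.
Qed.

Lemma P_obj_move_x v w h : P_obj N1 lam mu (vadd x h) v w
  = P_obj N1 lam mu x v w + dot (residual v w) h + / (2 * mu) * dot h h.
Proof.
rewrite /P_obj /residual !norm2_pow2 dot_scalel.
have -> : vsub (vsub (vadd x h) v) w = vadd (vsub (vsub x v) w) (vscale 1 h) by vext.
by rewrite dot_add_scale; field; lra.
Qed.

Lemma minimizer_normal v w :
  P_minimizer N1 N2 lam mu x v w -> normal_vec (dual_ball N2) w (residual v w).
Proof.
move=> [Bw vw_min] w' Bw'; set d := vsub w' w.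
suff : 0 <= - dot (residual v w) d by lra.
apply: (first_order_coeff _ (/ (2 * mu) * dot d d)) => t t01.
have := vw_min v _ (dual_ball_convex N2 w w' t Bw Bw' ltac:(lra)).
by rewrite P_obj_move_w -/d; lra.
Qed.

Lemma minimizer_subgrad v w :
  P_minimizer N1 N2 lam mu x v w -> subgrad N1 v (vsub (residual v w) (vscale lam v)).
Proof.
move=> [Bw vw_min] v'; set d := vsub v' v; rewrite dot_subl dot_scalel.
suff : 0 <= N1 v' - N1 v + lam * dot v d - dot (residual v w) d by lra.
apply: (first_order_coeff _ ((lam / 2 + / (2 * mu)) * dot d d)) => t t01.
have := vw_min (vadd v (vscale t d)) w Bw; rewrite P_obj_move_v -/d.
by have := norm_convex N1 hN1 v v' t ltac:(lra); rewrite -/d; lra.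
Qed.

Lemma S_lm_le y v w : dual_ball N2 w -> S_lm N1 N2 lam mu y <= P_obj N1 lam mu y v w.
Proof.
move=> Bw; have [lb _] := inf_of_glb
  (fun t => exists v w, dual_ball N2 w /\ t = P_obj N1 lam mu y v w) (P_obj N1 lam mu y v w)
  (ex_intro _ v (ex_intro _ w (conj Bw erefl))) ltac:(by move=> t [v' [w' [_ ->]]]; apply: P_obj_ge0).
by apply: lb; exists v, w.
Qed.

Lemma S_lm_at_minimizer v w :
  P_minimizer N1 N2 lam mu x v w -> S_lm N1 N2 lam mu x = P_obj N1 lam mu x v w.
Proof.
move=> [Bw vw_min]; apply: inf_of_attained; first by exists v, w.
by move=> t [v' [w' [Bw' ->]]]; apply: vw_min.
Qed.

Lemma gradient_S_lm v w p : P_minimizer N1 N2 lam mu x v w ->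
  is_gradient (S_lm N1 N2 lam mu) x p -> p = residual v w.
Proof.
move=> vw_min grad; apply: (gradient_of_upper_model _ _ _ _ (/ (2 * mu))) grad _.
  by apply/Rlt_le/Rinv_0_lt_compat; lra.
move=> h; rewrite (S_lm_at_minimizer _ _ vw_min) -P_obj_move_x.
exact: S_lm_le (proj1 vw_min).
Qed.

End ProblemP.

Definition variational {n} (C : vec n -> Prop) (a : vec n) : Prop :=
  C a /\ forall b, C b -> dot a (vsub a b) <= 0.

Lemma conv_to_variational {n} (C : vec n -> Prop) (s : nat -> vec n) a :
  variational C a ->
  (forall sg, strictly_incr sg -> exists tau b, strictly_incr tau /\
     vconv (fun k => s (sg (tau k))) b /\ variational C b) ->
  vconv s a.
Proof.
move=> [Ca a_var] clusters; apply: subseq_conv => sg sg_incr.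
have [tau [b [tau_incr [cv [Cb b_var]]]]] := clusters sg sg_incr.
exists tau; split => //.
have [[_ b_min] _] := min_norm_of_variational C b Cb b_var.
by have [_ uniq] := min_norm_of_variational C a Ca a_var; rewrite -(uniq b (conj Cb b_min)).
Qed.

Section Asymptotics.
Context {n : nat} {N1 N2 : vec n -> R} {x : vec n}.
Hypotheses (hN1 : is_norm N1) (hN2 : is_norm N2).
Context {lam mu : nat -> R} {c : R} {v w u p : nat -> vec n}.
Hypotheses (lam_pos : forall k, 0 < lam k) (mu_pos : forall k, 0 < mu k).
Hypotheses (lam_cv : Un_cv lam 0) (mu_cv : Un_cv mu 0).
Hypotheses (ratio_cv : Un_cv (fun k => lam k / mu k) c) (c_pos : 0 < c).
Hypothesis w_ball : forall k, dual_ball N2 (w k).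
Hypothesis p_normal : forall k, normal_vec (dual_ball N2) (w k) (p k).
Hypothesis p_subgrad : forall k, subgrad N1 (v k) (vsub (p k) (vscale (lam k) (v k))).
Hypothesis u_def : forall k, u k = vsub x (w k).
Hypothesis v_def : forall k, v k = vsub (u k) (vscale (mu k) (p k)).

(* Approximate version of the inequality characterizing U(x) and dS(x). *)
Lemma approx_subgrad_ineq k y u' : dual_ball N2 (vsub y u') ->
  N1 (v k) + dot (p k) (vsub y x) - lam k * dot (v k) (vsub u' (v k)) <= N1 u'.
Proof.
move=> Byu'; have pv : dot (p k) (vsub u' (v k)) = dot (p k) (vsub y x)
    + mu k * dot (p k) (p k) - dot (p k) (vsub (vsub y u') (w k)).
  have -> : vsub u' (v k) = vsub (vadd (vsub y x) (vscale (mu k) (p k))) (vsub (vsub y u') (w k)).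
    by rewrite v_def u_def; vext.
  by rewrite dot_subr dot_addr dot_scaler.
have := p_subgrad k u'; have := p_normal k _ Byu'; rewrite dot_subl dot_scalel pv.
have : 0 <= mu k * dot (p k) (p k) by apply: Rmult_le_pos; [apply: Rlt_le; exact: mu_pos | exact: dot_ge0].
lra.
Qed.

(* Monotonicity couples the iterates with any uu in U(x), pp in dS(x). *)
Lemma coupled_ineq k uu pp : in_U N1 N2 x uu -> in_subdiff_S N1 N2 x pp ->
  lam k / mu k * dot (v k) (vsub (v k) uu) <= dot (vsub pp (p k)) (p k).
Proof.
move=> Uuu Spp; have [pp_sub pp_normal] := subdiff_S_at_U N1 N2 hN1 x uu pp Uuu Spp.
have := subgrad_monotone N1 _ _ _ _ (p_subgrad k) pp_sub.
have := normal_monotone _ _ _ _ _ (w_ball k) (proj1 Uuu) (p_normal k) pp_normal.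
have -> : vsub (w k) (vsub x uu) = vsub (vsub uu (v k)) (vscale (mu k) (p k)).
  by rewrite v_def u_def; vext.
rewrite !dot_subl !dot_subr !dot_scalel !dot_scaler (dot_sym pp (p k)).
move=> H1 H2; apply: (Rmult_le_reg_l (mu k)) => //.
have -> : mu k * (lam k / mu k * (dot (v k) (v k) - dot (v k) uu))
          = lam k * (dot (v k) (v k) - dot (v k) uu) by field; have := mu_pos k; lra.
by rewrite !(dot_sym (v k)) (dot_sym pp (v k)) (dot_sym pp uu) (dot_sym (p k) uu) in H1 H2 *; nra.
Qed.

(* u_k = x - w_k stays in a translate of the bounded dual ball. *)
Lemma u_bounded k : norm2 (u k) <= norm2 x + (norm_const N2 + 1).
Proof.
rewrite u_def; apply: Rle_trans (norm2_sub_le _ _) _.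
by have := dual_ball_bounded N2 hN2 _ (w_ball k); lra.
Qed.

(* p_k = (g_k + lam_k u_k) / (1 + lam_k mu_k) with g_k a subgradient of N1. *)
Lemma p_bounded : exists M, forall k, norm2 (p k) <= M.
Proof.
have [Lam [_ Lam_bd]] := maj_by_pos lam (exist _ 0 lam_cv).
exists (norm_const N1 + Lam * (norm2 x + (norm_const N2 + 1))) => k.
have lmu0 : 0 <= lam k * mu k by have := lam_pos k; have := mu_pos k; nra.
have : norm2 (vscale (1 + lam k * mu k) (p k)) <= norm_const N1 + Lam * (norm2 x + (norm_const N2 + 1)).
  have -> : vscale (1 + lam k * mu k) (p k)
            = vadd (vsub (p k) (vscale (lam k) (v k))) (vscale (lam k) (u k)) by rewrite v_def; vext.
  apply: Rle_trans (norm2_triangle _ _) _; rewrite norm2_scale.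
  have := subgrad_norm_bounded N1 _ _ hN1 (p_subgrad k).
  have := Rmult_le_compat _ _ _ _ (Rabs_pos (lam k)) (norm2_ge0 (u k)) (Lam_bd k) (u_bounded k).
  lra.
rewrite norm2_scale Rabs_pos_eq; last lra.
by have := norm2_ge0 (p k); nra.
Qed.

Section Cluster.
Variables (phi : nat -> nat) (ub pb : vec n).
Hypotheses (phi_incr : strictly_incr phi).
Hypotheses (u_cv : vconv (fun k => u (phi k)) ub) (p_cv : vconv (fun k => p (phi k)) pb).

Lemma cluster_v_cv : vconv (fun k => v (phi k)) ub.
Proof.
have -> : (fun k => v (phi k)) = fun k => vsub (u (phi k)) (vscale (mu (phi k)) (p (phi k))).
  by apply: functional_extensionality => k; rewrite v_def.
have -> : ub = vsub ub (vscale 0 pb) by vext.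
by apply: vconv_sub u_cv (vconv_scale (Un_cv_subseq phi_incr mu_cv) p_cv).
Qed.

Lemma cluster_in_U_subdiff : in_U N1 N2 x ub /\ in_subdiff_S N1 N2 x pb.
Proof.
apply: (U_subdiff_of_ineq N1 N2 hN1).
  apply: (dual_ball_closed N2 (fun k => w (phi k)) _ (fun k => w_ball (phi k))).
  have -> : (fun k => w (phi k)) = fun k => vsub x (u (phi k)).
    by apply: functional_extensionality => k; rewrite u_def; vext.
  exact: vconv_sub (vconv_const x) u_cv.
move=> y u' Byu'.
have -> : N1 ub + dot pb (vsub y x) = N1 ub + dot pb (vsub y x) - 0 * dot ub (vsub u' ub)
  by ring.
apply: (Rle_cv_lim (fun k => approx_subgrad_ineq (phi k) y u' Byu') _ (cv_const _)).
apply: CV_minus; [apply: CV_plus | apply: CV_mult].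
- exact: norm_cv hN1 cluster_v_cv.
- exact: dot_cv p_cv (vconv_const _).
- exact: Un_cv_subseq phi_incr lam_cv.
- exact: dot_cv cluster_v_cv (vconv_sub (vconv_const u') cluster_v_cv).
Qed.

Lemma cluster_coupled uu pp : in_U N1 N2 x uu -> in_subdiff_S N1 N2 x pp ->
  c * dot ub (vsub ub uu) <= dot (vsub pp pb) pb.
Proof.
move=> Uuu Spp; apply: (Rle_cv_lim (fun k => coupled_ineq (phi k) uu pp Uuu Spp)).
- apply: CV_mult; first exact: Un_cv_subseq phi_incr ratio_cv.
  exact: dot_cv cluster_v_cv (vconv_sub cluster_v_cv (vconv_const uu)).
- exact: dot_cv (vconv_sub (vconv_const pp) p_cv) p_cv.
Qed.

Lemma cluster_variational :
  variational (in_U N1 N2 x) ub /\ variational (in_subdiff_S N1 N2 x) pb.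
Proof.
have [Uub Spb] := cluster_in_U_subdiff.
split.
- split => // uu Uuu; have := cluster_coupled _ _ Uuu Spb; have -> : vsub pb pb = vzero by vext.
  by rewrite dot_zerol => H; apply: (Rmult_le_reg_l c) => //; lra.
- split => // pp Spp; have := cluster_coupled _ _ Uub Spp; have -> : vsub ub ub = vzero by vext.
  by rewrite dot_zeror dot_subl dot_subr (dot_sym pp pb); lra.
Qed.

End Cluster.

Lemma cluster_exists sg : strictly_incr sg -> exists tau ub pb, strictly_incr tau /\
  vconv (fun k => u (sg (tau k))) ub /\ vconv (fun k => p (sg (tau k))) pb /\
  variational (in_U N1 N2 x) ub /\ variational (in_subdiff_S N1 N2 x) pb.
Proof.
move=> sg_incr; have [Mp p_bd] := p_bounded.
have [phi [ub [phi_incr u_cv]]] := bounded_subseq (fun k => u (sg k)) _ (fun k => u_bounded (sg k)).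
have [psi [pb [psi_incr p_cv]]] := bounded_subseq (fun k => p (sg (phi k))) _ (fun k => p_bd (sg (phi k))).
have tau_incr := strictly_incr_comp _ _ phi_incr psi_incr.
have u_cv' := vconv_subseq psi_incr u_cv.
exists (fun k => phi (psi k)), ub, pb; do 3 (split => //).
exact: cluster_variational (strictly_incr_comp _ _ sg_incr tau_incr) u_cv' p_cv.
Qed.

Lemma asymptotic_min_norm :
  (exists us, variational (in_U N1 N2 x) us /\ vconv u us) /\
  (exists ps, variational (in_subdiff_S N1 N2 x) ps /\ vconv p ps).
Proof.
have [tau [us [ps [_ [_ [_ [Vus Vps]]]]]]] := cluster_exists (fun k => k) (fun k => ltnSn k).
split; [exists us | exists ps]; split => //.
- apply: (conv_to_variational (in_U N1 N2 x)) => // sg sg_incr.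
  have [tau' [ub [pb [tau_incr [ucv [_ [Vub _]]]]]]] := cluster_exists sg sg_incr.
  by exists tau', ub.
- apply: (conv_to_variational (in_subdiff_S N1 N2 x)) => // sg sg_incr.
  have [tau' [ub [pb [tau_incr [_ [pcv [_ Vpb]]]]]]] := cluster_exists sg sg_incr.
  by exists tau', pb.
Qed.

End Asymptotics.

Theorem proposition5p4 (n : nat) (N1 N2 : vec n -> R)
  (hN1 : is_norm N1) (hN2 : is_norm N2) (x : vec n)
  (lam mu : nat -> R) (c : R)
  (hlam : forall k, 0 < lam k) (hmu : forall k, 0 < mu k)
  (hlam0 : Un_cv lam 0) (hmu0 : Un_cv mu 0)
  (hc : 0 < c) (hratio : Un_cv (fun k => lam k / mu k) c)
  (v w u p : nat -> vec n)
  (hvw : forall k, P_minimizer N1 N2 (lam k) (mu k) x (v k) (w k))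
  (hu : forall k, u k = vsub x (w k))
  (hp : forall k, is_gradient (S_lm N1 N2 (lam k) (mu k)) x (p k)) :
  (exists ustar,
      (in_U N1 N2 x ustar /\ forall u', in_U N1 N2 x u' -> norm2 ustar <= norm2 u') /\
      (forall u', (in_U N1 N2 x u' /\ forall u'', in_U N1 N2 x u'' -> norm2 u' <= norm2 u'')
                  -> u' = ustar) /\
      vconv u ustar) /\
  (exists pstar,
      (in_subdiff_S N1 N2 x pstar /\
         forall p', in_subdiff_S N1 N2 x p' -> norm2 pstar <= norm2 p') /\
      (forall p', (in_subdiff_S N1 N2 x p' /\
                   forall p'', in_subdiff_S N1 N2 x p'' -> norm2 p' <= norm2 p'')
                  -> p' = pstar) /\
      vconv p pstar).
Proof.
have p_res k : p k = residual x (mu k) (v k) (w k).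
  exact: gradient_S_lm hN1 (hlam k) (hmu k) _ _ _ (hvw k) (hp k).
have p_normal k : normal_vec (dual_ball N2) (w k) (p k).
  by rewrite p_res; apply: minimizer_normal (hmu k) _ _ (hvw k).
have p_subgrad k : subgrad N1 (v k) (vsub (p k) (vscale (lam k) (v k))).
  by rewrite p_res; apply: minimizer_subgrad hN1 (hmu k) _ _ (hvw k).
have v_def k : v k = vsub (u k) (vscale (mu k) (p k)).
  apply: functional_extensionality => i; rewrite hu p_res /residual /vsub /vscale.
  by field; have := hmu k; lra.
have [[us [[Uus us_var] u_cv]] [ps [[Sps ps_var] p_cv]]] :=
  asymptotic_min_norm hN1 hN2 hlam hmu hlam0 hmu0 hratio hc
    (fun k => proj1 (hvw k)) p_normal p_subgrad hu v_def.
split; [exists us | exists ps].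
- by case: (min_norm_of_variational _ _ Uus us_var) => us_min us_uniq.
- by case: (min_norm_of_variational _ _ Sps ps_var) => ps_min ps_uniq.
Qed.
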